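(* Let $A$ be a real symmetric $n\times n$ matrix such that the graph $\mathcal{G}(A)$ is connected and all nonzero off-diagonal entries of $A$ have the same sign. Let $V=\{1,\dots,n\}$ be the vertex set of $\mathcal{G}(A)$ and let $S\subseteq V$ be a zero forcing set of $\mathcal{G}(A)$. Then the real Lie algebra generated by $A$ and $\{{\bf e}_j{\bf e}_j^T: j\in S\}$ equals $gl(n,\mathbb{R})$.
   Context: ${\bf e}_j$ is the $j$th standard basis vector of $\mathbb{R}^n$. For a real symmetric $A=[a_{kj}]$, $\mathcal{G}(A)$ is the simple graph on $\{1,\dots,n\}$ with edges $\{kj: a_{kj}\neq0,\ k\neq j\}$. Zero forcing: color each vertex of a graph black or white; a black vertex $v$ forces (infects) a white vertex $w$ if $w$ is the unique white neighbor of $v$, in which case $w$ is recolored black. A set $S$ of vertices is a zero forcing set if, starting with exactly the vertices in $S$ black and repeatedly applying forces, all vertices eventually become black. The real Lie algebra generated by a set of matrices is the smallest real vector space containing them closed under $[X,Y]=XY-YX$; $gl(n,\mathbb{R})$ is the Lie algebra of all real $n\times n$ matrices. *)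

From HB Require Import structures.
From mathcomp Require Import all_boot all_order all_algebra.
From mathcomp Require Import reals.
Set Implicit Arguments. Unset Strict Implicit. Unset Printing Implicit Defensive.
Import Order.TTheory GRing.Theory Num.Theory.
Local Open Scope ring_scope.

Definition graph_of (R : ringType) (n : nat) (A : 'M[R]_n) : rel 'I_n :=
  fun k j => (k != j) && (A k j != 0).

Definition graph_connected (T : finType) (e : rel T) : Prop :=
  forall u v : T, connect e u v.

(* Zero forcing: the set of vertices that eventually become black when
   starting with exactly S black and repeatedly applying the color-change rule
   (a black vertex u forces w if w is the unique white neighbour of u). *)
Inductive zf_black (T : finType) (e : rel T) (S : {set T}) : T -> Prop :=
| zf_init v : v \in S -> zf_black e S v
| zf_force u w : zf_black e S u -> e u w ->
    (forall x, e u x -> x != w -> zf_black e S x) -> zf_black e S w.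

Definition zero_forcing_set (T : finType) (e : rel T) (S : {set T}) : Prop :=
  forall v : T, zf_black e S v.

Definition lie_bracket (R : ringType) (n : nat) (X Y : 'M[R]_n) : 'M[R]_n :=
  X *m Y - Y *m X.

Inductive lie_gen (R : ringType) (n : nat) (G : 'M[R]_n -> Prop) : 'M[R]_n -> Prop :=
| lg_gen X : G X -> lie_gen G X
| lg_zero : lie_gen G 0
| lg_add X Y : lie_gen G X -> lie_gen G Y -> lie_gen G (X + Y)
| lg_scale (c : R) X : lie_gen G X -> lie_gen G (c *: X)
| lg_bracket X Y : lie_gen G X -> lie_gen G Y -> lie_gen G (lie_bracket X Y).

From mathcomp Require Import all_boot all_order all_algebra.
From mathcomp Require Import reals ring.
Set Implicit Arguments. Unset Strict Implicit. Unset Printing Implicit Defensive.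
Import Order.TTheory GRing.Theory Num.Theory.
Local Open Scope ring_scope.

(* Write E_ij for the matrix units and L for the generated Lie algebra.
   For a unit E_kk, the map X |-> X - [E_kk, [E_kk, X]] - X_kk E_kk clears row
   and column k of X, so L is stable under clearing the rows and columns of any
   vertex whose E_kk lies in L.  If u forces w, the neighbours of u other than
   w already carry E_xx in L; clearing them in [E_uu, [E_uu, A]] (which keeps
   only row and column u of A) leaves A_uw (E_uw + E_wu), and from
   E_uu and E_uw + E_wu brackets produce E_ww.  Hence every E_vv lies in L.
   Clearing all other rows and columns of A then yields E_uw + E_wu, hence
   E_uw, for every edge uw; brackets propagate E_uv along paths, and
   connectedness gives every matrix unit, so L is everything. *)

Section LieGenerated.
Variables (R : nzRingType) (n : nat) (G : 'M[R]_n -> Prop).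
Local Notation L := (lie_gen G).

Lemma lie_genN X : L X -> L (- X).
Proof. by move=> LX; rewrite -scaleN1r; apply: lg_scale. Qed.

Lemma lie_genB X Y : L X -> L Y -> L (X - Y).
Proof. by move=> LX LY; apply: lg_add => //; apply: lie_genN. Qed.

Lemma lie_gen_sum (I : Type) (r : seq I) (P : pred I) (F : I -> 'M[R]_n) :
  (forall i, P i -> L (F i)) -> L (\sum_(i <- r | P i) F i).
Proof. by move=> LF; apply: big_ind => //; [exact: lg_zero | exact: lg_add]. Qed.

Lemma lie_gen_full_of_delta :
  (forall i j, L (delta_mx i j)) -> forall M, L M.
Proof.
move=> Ldelta M; rewrite (matrix_sum_delta M).
by apply: lie_gen_sum => i _; apply: lie_gen_sum => j _; apply: lg_scale.
Qed.

Lemma lie_gen_delta_trans a b c :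
  L (delta_mx a a) -> L (delta_mx a b) -> L (delta_mx b c) -> L (delta_mx a c).
Proof.
move=> Laa Lab Lbc; have [<- // | neq_ac] := eqVneq a c.
suff -> : delta_mx a c = lie_bracket (delta_mx a b) (delta_mx b c) :> 'M[R]_n.
  exact: lg_bracket.
rewrite /lie_bracket !mul_delta_mx_cond eqxx eq_sym (negPf neq_ac).
by rewrite mulr1n mulr0n subr0.
Qed.

End LieGenerated.

Section DeltaEntries.
Variables (R : nzRingType) (n : nat).
Local Notation E i j := (delta_mx i j : 'M[R]_n).

Lemma addmx_entry (X Y : 'M[R]_n) i j : (X + Y) i j = X i j + Y i j.
Proof. by rewrite mxE. Qed.

Lemma oppmx_entry (X : 'M[R]_n) i j : (- X) i j = - X i j.
Proof. by rewrite mxE. Qed.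

Lemma scalemx_entry c (X : 'M[R]_n) i j : (c *: X) i j = c * X i j.
Proof. by rewrite mxE. Qed.

Lemma delta_entry a b i j : E a b i j = ((i == a) && (j == b))%:R.
Proof. by rewrite mxE. Qed.

Definition entryE := (addmx_entry, oppmx_entry, scalemx_entry, delta_entry).

Lemma delta_mulmxE a b (X : 'M[R]_n) i j : (E a b *m X) i j = (i == a)%:R * X b j.
Proof.
rewrite mxE (bigD1 b) //= big1 ?addr0; first by rewrite mxE eqxx andbT.
by move=> l /negPf neq_lb; rewrite mxE neq_lb andbF mul0r.
Qed.

Lemma mulmx_deltaE a b (X : 'M[R]_n) i j : (X *m E a b) i j = X i a * (j == b)%:R.
Proof.
rewrite mxE (bigD1 a) //= big1 ?addr0; first by rewrite mxE eqxx.
by move=> l /negPf neq_la; rewrite mxE neq_la mulr0.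
Qed.

Lemma lie_bracket_deltaE k (X : 'M[R]_n) i j :
  lie_bracket (E k k) X i j = (i == k)%:R * X k j - X i k * (j == k)%:R.
Proof. by rewrite /lie_bracket !entryE delta_mulmxE mulmx_deltaE. Qed.

End DeltaEntries.

(* Split on every test [a == b] between index variables, substituting equal
   indices and closing branches with contradictory hypotheses [a != a]. *)
Ltac case_indices := repeat match goal with
 | H : is_true (?a != ?a) |- _ => by rewrite eqxx in H
 | |- context[?a == ?b] => is_var a; is_var b;
   let H := fresh "H" in let H' := fresh "H" in
   case: (eqVneq a b) => [?|H]; [subst; rewrite ?eqxx /= |
     have H' : b != a by rewrite eq_sym];
   rewrite ?(negPf H) ?(negPf H') /=
 end.

Section ClearRowCol.
Variables (R : comNzRingType) (n : nat) (G : 'M[R]_n -> Prop).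
Local Notation L := (lie_gen G).
Local Notation E i j := (delta_mx i j : 'M[R]_n).

Definition clear_rowcol (s : seq 'I_n) (X : 'M[R]_n) :=
  \matrix_(i, j) if (i \in s) || (j \in s) then 0 else X i j.

Lemma clear_rowcol1 k X :
  clear_rowcol [:: k] X
  = X - lie_bracket (E k k) (lie_bracket (E k k) X) - X k k *: E k k.
Proof.
apply/matrixP => i j; rewrite [LHS]mxE !entryE delta_mulmxE mulmx_deltaE.
rewrite !lie_bracket_deltaE !mem_seq1.
by case_indices; ring.
Qed.

Lemma lie_gen_clear_rowcol s X :
  (forall k, k \in s -> L (E k k)) -> L X -> L (clear_rowcol s X).
Proof.
elim: s X => [|k s IHs] X Ls LX.
  by have -> : clear_rowcol [::] X = X by apply/matrixP => i j; rewrite mxE.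
have -> : clear_rowcol (k :: s) X = clear_rowcol [:: k] (clear_rowcol s X).
  apply/matrixP => i j; rewrite !mxE !in_cons.
  by case: (i == k); case: (j == k); case: (i \in s); case: (j \in s).
have Lkk := Ls k (mem_head _ _).
have LsX : L (clear_rowcol s X).
  by apply: IHs => // k' sk'; apply: Ls; rewrite in_cons sk' orbT.
rewrite clear_rowcol1; apply: lie_genB; last exact: lg_scale.
by apply: lie_genB => //; apply: lg_bracket => //; apply: lg_bracket.
Qed.

End ClearRowCol.

Section ZeroForcing.
Variables (R : fieldType) (n : nat) (G : 'M[R]_n -> Prop).
Hypothesis two_neq0 : 2 != 0 :> R.
Local Notation L := (lie_gen G).
Local Notation E i j := (delta_mx i j : 'M[R]_n).

Lemma lie_genZ_inv c X : c != 0 -> L (c *: X) -> L X.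
Proof.
move=> c_neq0 LcX; rewrite -[X]scale1r -(mulVf c_neq0) -scalerA.
exact: lg_scale.
Qed.

Lemma lie_gen_delta_pair u w : u != w -> L (E u u) -> L (E u w + E w u) ->
  [/\ L (E u w), L (E w u) & L (E w w)].
Proof.
move=> neq_uw Luu LF; set F := E u w + E w u.
have bracketF : lie_bracket (E u u) F = E u w - E w u.
  by apply/matrixP => i j; rewrite lie_bracket_deltaE !entryE; case_indices; ring.
have Luw : L (E u w).
  have -> : E u w = 2^-1 *: (F + lie_bracket (E u u) F).
    by apply/matrixP => i j; rewrite bracketF !entryE; case_indices; field.
  by apply: lg_scale; apply: lg_add => //; apply: lg_bracket.
have Lwu : L (E w u).
  have -> : E w u = F - E u w by rewrite /F addrC addKr.
  exact: lie_genB.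
split => //.
(* [F, [E_uu, F]] = 2 (E_ww - E_uu) *)
have -> : E w w = E u u + 2^-1 *: lie_bracket F (lie_bracket (E u u) F).
  rewrite bracketF /lie_bracket /F.
  rewrite !(mulmxDl, mulmxDr, mulmxBl, mulmxBr, mulmxN, mulNmx, mul_delta_mx_cond).
  rewrite !eqxx (negPf neq_uw) (eq_sym w u) (negPf neq_uw) /= ?mulr0n ?mulr1n.
  by apply/matrixP => i j; rewrite !mxE; case_indices; field.
by apply: lg_add => //; apply: lg_scale; apply: lg_bracket => //; apply: lg_bracket.
Qed.

Variable A : 'M[R]_n.
Hypotheses (symA : A^T = A) (LA : L A).

Let A_sym a b : A a b = A b a.
Proof. by rewrite -{1}symA mxE. Qed.

Lemma lie_gen_delta_forced u w :
  graph_of A u w -> L (E u u) ->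
  (forall x, graph_of A u x -> x != w -> L (E x x)) -> L (E w w).
Proof.
move=> /andP[neq_uw Auw_neq0] Luu Lnbr.
set s := [seq k <- enum 'I_n | graph_of A u k && (k != w)].
have mem_s k : (k \in s) = graph_of A u k && (k != w).
  by rewrite mem_filter mem_enum andbT.
set Y := lie_bracket (E u u) (lie_bracket (E u u) A).
have LY : L (clear_rowcol s Y).
  apply: lie_gen_clear_rowcol => [k|]; first by rewrite mem_s => /andP[]; exact: Lnbr.
  by apply: lg_bracket => //; apply: lg_bracket.
suff clearY : clear_rowcol s Y = A u w *: (E u w + E w u).
  have LF : L (E u w + E w u) by apply: (lie_genZ_inv Auw_neq0); rewrite -clearY.
  by case: (lie_gen_delta_pair neq_uw Luu LF).
apply/matrixP => i j; rewrite [LHS]mxE !mem_s /graph_of /Y.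
rewrite !lie_bracket_deltaE !entryE ?(A_sym i u) ?(A_sym j u).
have [Aui_eq0|Aui_neq0] := eqVneq (A u i) 0;
have [Auj_eq0|Auj_neq0] := eqVneq (A u j) 0;
  rewrite ?Aui_eq0 ?Auj_eq0 ?eqxx /=; case_indices;
  rewrite ?Aui_eq0 ?Auj_eq0 ?eqxx ?andbF ?andbT ?orbF ?orbT /=;
  try by [rewrite Aui_eq0 eqxx in Auw_neq0 | rewrite Auj_eq0 eqxx in Auw_neq0].
all: ring.
Qed.

Lemma lie_gen_delta_edge u w :
  (forall k, L (E k k)) -> graph_of A u w -> L (E u w).
Proof.
move=> Ldiag /andP[neq_uw Auw_neq0].
set s := [seq k <- enum 'I_n | (k != u) && (k != w)].
have mem_s k : (k \in s) = (k != u) && (k != w).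
  by rewrite mem_filter mem_enum andbT.
set Z := clear_rowcol s A - A u u *: E u u - A w w *: E w w.
have LZ : L Z.
  apply: lie_genB; [apply: lie_genB|]; last exact: lg_scale.
    by apply: lie_gen_clear_rowcol.
  exact: lg_scale.
suff clearA : Z = A u w *: (E u w + E w u).
  have LF : L (E u w + E w u) by apply: (lie_genZ_inv Auw_neq0); rewrite -clearA.
  by case: (lie_gen_delta_pair neq_uw (Ldiag u) LF).
apply/matrixP => i j; rewrite /Z !entryE [clear_rowcol _ _ _ _]mxE !mem_s.
by case_indices; rewrite ?(A_sym w u) ?eqxx ?andbF ?andbT ?orbF ?orbT /=; ring.
Qed.

Lemma lie_gen_delta_zf_black (S : {set 'I_n}) v :
  (forall j, j \in S -> L (E j j)) -> zf_black (graph_of A) S v -> L (E v v).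
Proof.
move=> LS; elim=> [j /LS // | u w _ Luu uw _ Lnbr].
exact: lie_gen_delta_forced uw Luu Lnbr.
Qed.

Lemma lie_gen_delta_connect u v :
  (forall k, L (E k k)) -> connect (graph_of A) u v -> L (E u v).
Proof.
move=> Ldiag /connectP[p]; elim: p u => [|x p IHp] u /=; first by move=> _ ->.
case/andP=> ux px last_v; apply: (lie_gen_delta_trans (Ldiag u)).
  exact: lie_gen_delta_edge ux.
exact: IHp.
Qed.

End ZeroForcing.

Theorem theorem4p1 (R : realType) (n : nat) (A : 'M[R]_n) (S : {set 'I_n}) :
  A^T = A ->
  graph_connected (graph_of A) ->
  ((forall k j : 'I_n, k != j -> A k j != 0 -> 0 < A k j) \/
   (forall k j : 'I_n, k != j -> A k j != 0 -> A k j < 0)) ->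
  zero_forcing_set (graph_of A) S ->
  forall M : 'M[R]_n,
    lie_gen (fun X : 'M[R]_n => X = A \/ exists2 j : 'I_n, j \in S & X = delta_mx j j) M.
Proof.
move=> symA connA _ zfS.
set G := fun X : 'M[R]_n => X = A \/ exists2 j : 'I_n, j \in S & X = delta_mx j j.
have two_neq0 : 2 != 0 :> R by rewrite pnatr_eq0.
have LA : lie_gen G A by apply: lg_gen; left.
have Ldiag v : lie_gen G (delta_mx v v).
  apply: (lie_gen_delta_zf_black two_neq0 symA LA _ (zfS v)) => j Sj.
  by apply: lg_gen; right; exists j.
apply: lie_gen_full_of_delta => u v.
exact: (lie_gen_delta_connect two_neq0 symA LA Ldiag (connA u v)).
Qed.
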